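(* Let $A_1,\ldots,A_d$ be Hermitian $n\times n$ matrices such that the quadric $M_H=\{\Re e\, w_j={}^t\bar zA_jz,\ j=1,\dots,d\}\subset\mathbb C^{n+d}$ is strongly pseudoconvex, and let $b\in\mathbb R^d$ with $\sum_j b_jA_j$ invertible. For $a\in\mathbb C^d$ near $0$ put $P(a)=\sum_{j}a_jA_j$, $A(a)=\sum_j(b_j-a_j-\overline{a_j})A_j$, and let $X(a)$ be the unique $n\times n$ matrix with $\|X(a)\|<1$ solving $$P(a)X^2+A(a)X+{}^t\overline{P(a)}=0.$$ Let $a_0\in\mathbb R^d$ be small enough, and assume coordinates are chosen (by a linear change) so that $A(a_0)=\sum_j(b_j-2a_{0,j})A_j=I$. Write $P=P(a_0)$, $X=X(a_0)$ and let $\varphi:\mathcal M_n(\mathbb C)\to\mathcal M_n(\mathbb C)$, $\varphi(N)=N+P(NX+XN)$ (which is invertible for $a_0$ small). Then for every $s=1,\ldots,d$, $$\frac{\partial X}{\partial\,\Re e\, a_s}(a_0)=\varphi^{-1}\big(-A_s(I-X)^2\big)=-\varphi^{-1}(A_s)(I-X)^2.$$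
   Context: $M_H$ strongly pseudoconvex means there is $c\in\mathbb R^d$ with $\sum_j c_jA_j$ positive definite. $\mathcal M_n(\mathbb C)$ denotes complex $n\times n$ matrices. *)

From HB Require Import structures.
From mathcomp Require Import all_boot all_order all_algebra.
From mathcomp Require Import all_classical all_reals all_analysis.
From mathcomp Require Import complex.
Set Implicit Arguments. Unset Strict Implicit. Unset Printing Implicit Defensive.
Import Order.TTheory GRing.Theory Num.Theory.
Local Open Scope ring_scope.
Local Open Scope complex_scope.

Section Defs.
Variable R : realType.
Local Notation C := R[i].

Definition rC (x : R) : C := x%:C.

Definition adjmx (m n : nat) (M : 'M[C]_(m, n)) : 'M[C]_(n, m) :=
  (map_mx (fun z : C => z^*) M)^T.

Definition is_hermitian (n : nat) (M : 'M[C]_n) : Prop := adjmx M = M.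

(* positive definite: v^* M v > 0 for every nonzero v (as a complex number,
   i.e. real and positive) *)
Definition posdef (n : nat) (M : 'M[C]_n) : Prop :=
  forall v : 'cV[C]_n, v != 0 -> 0 < (adjmx v *m M *m v) ord0 ord0.

Definition lincomb (d n : nat) (c : 'I_d -> C) (A : 'I_d -> 'M[C]_n) : 'M[C]_n :=
  \sum_(j < d) c j *: A j.

(* M_H strongly pseudoconvex: some real combination of the A_j is positive definite *)
Definition strongly_pseudoconvex (d n : nat) (A : 'I_d -> 'M[C]_n) : Prop :=
  exists c : 'I_d -> R, posdef (lincomb (fun j => (c j)%:C) A).

Definition cabs (z : C) : R := Num.sqrt (complex.Re z ^+ 2 + complex.Im z ^+ 2).

Definition vnorm (n : nat) (v : 'cV[C]_n) : R :=
  Num.sqrt (\sum_(i < n) (complex.Re (v i ord0) ^+ 2 + complex.Im (v i ord0) ^+ 2)).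

Definition opnorm (n : nat) (M : 'M[C]_n) : R :=
  sup [set vnorm (M *m v) | v in [set v : 'cV[C]_n | vnorm v <= 1]].

Definition Pa (d n : nat) (A : 'I_d -> 'M[C]_n) (a : 'I_d -> C) : 'M[C]_n :=
  lincomb a A.

Definition Aa (d n : nat) (A : 'I_d -> 'M[C]_n) (b : 'I_d -> R) (a : 'I_d -> C)
  : 'M[C]_n := lincomb (fun j => (b j)%:C - a j - (a j)^*) A.

Definition solves_eq (d n : nat) (A : 'I_d -> 'M[C]_n) (b : 'I_d -> R)
  (a : 'I_d -> C) (Y : 'M[C]_n) : Prop :=
  Pa A a *m (Y *m Y) + Aa A b a *m Y + adjmx (Pa A a) = 0.

Definition phimap (n : nat) (P X : 'M[C]_n) (N : 'M[C]_n) : 'M[C]_n :=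
  N + P *m (N *m X + X *m N).

Definition shift_re (d : nat) (a0 : 'I_d -> R) (s : 'I_d) (t : R) : 'I_d -> C :=
  fun j => (a0 j + (if j == s then t else 0))%:C.

(* Y : R -> 'M[C]_n is differentiable at 0 with derivative D : the real and
   imaginary parts of every entry are differentiable at 0 with the corresponding
   parts of D as derivatives (derivative along the real direction 1). *)
Definition mx_has_derive0 (n : nat) (Y : R -> 'M[C]_n) (D : 'M[C]_n) : Prop :=
  forall i j : 'I_n,
    is_derive (0 : R) (1 : R) (fun t => complex.Re (Y t i j)) (complex.Re (D i j)) /\
    is_derive (0 : R) (1 : R) (fun t => complex.Im (Y t i j)) (complex.Im (D i j)).

End Defs.

From HB Require Import structures.
From mathcomp Require Import all_boot all_order all_algebra.
From mathcomp Require Import all_classical all_reals all_analysis.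
From mathcomp Require Import complex.
From mathcomp Require Import ring lra.
Import Order.TTheory GRing.Theory Num.Theory.
Import numFieldNormedType.Exports.
Local Open Scope classical_set_scope.
Local Open Scope ring_scope.
Local Open Scope complex_scope.
Set Implicit Arguments. Unset Strict Implicit. Unset Printing Implicit Defensive.

(** Along the real direction [a0 + t e_s], with [A(a0) = 1] and [P(a)] Hermitian for
    real [a], the equation reads [(P + t A_s) Y^2 + (1 - 2 t A_s) Y + (P + t A_s) = 0].
    Subtracting the equation [P X^2 + X + P = 0] of [X = X(a0)] gives
    [phi (Y - X) = - t A_s (1 - Y)^2 - P (Y - X)^2].  In the entrywise l1 norm, which is
    submultiplicative and bounded by [n^2] on matrices of operator norm [< 1], [phi] is
    within [2 |P| |X|] of the identity, so for [a0] small it is invertible with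
    [|N| <= 2 |phi N|].  This gives first [|Y - X| = O(t)], then
    [|Y - X - t D| = O(t^2)] for [D = phi^-1 (- A_s (1 - X)^2)].  Since [X] commutes with
    [(1 - X)^2], so does [phi] with right multiplication by it, whence
    [D = - phi^-1 (A_s) (1 - X)^2]. *)

Section ComplexModulus.
Variable R : realType.
Implicit Types (x : R) (z w : R[i]).

Lemma cabsE z : cabs z = ComplexField.Normc.normc z.
Proof. by case: z. Qed.

Lemma cabs_ge0 z : 0 <= cabs z.
Proof. exact: sqrtr_ge0. Qed.

Lemma ler_cabsD z w : cabs (z + w) <= cabs z + cabs w.
Proof. by rewrite !cabsE; apply: le_normcD. Qed.

Lemma cabsN z : cabs (- z) = cabs z.
Proof. by rewrite !cabsE; apply: normcN. Qed.

Lemma cabsM z w : cabs (z * w) = cabs z * cabs w.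
Proof. by rewrite !cabsE; apply: ComplexField.Normc.normcM. Qed.

Lemma cabs0 : cabs (0 : R[i]) = 0.
Proof. by rewrite cabsE ComplexField.Normc.normc0. Qed.

Lemma cabs_eq0 z : cabs z = 0 -> z = 0.
Proof. by rewrite cabsE; apply: ComplexField.Normc.eq0_normc. Qed.

Lemma cabs_real x : cabs x%:C = `|x|.
Proof. by rewrite /cabs /= expr0n /= addr0 sqrtr_sqr. Qed.

Lemma ler_Re_cabs z : `|complex.Re z| <= cabs z.
Proof. by rewrite /cabs -sqrtr_sqr ler_wsqrtr // lerDl sqr_ge0. Qed.

Lemma ler_Im_cabs z : `|complex.Im z| <= cabs z.
Proof. by rewrite /cabs -sqrtr_sqr ler_wsqrtr // lerDr sqr_ge0. Qed.

Lemma ler_cabs_sum (I : finType) (F : I -> R[i]) :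
  cabs (\sum_i F i) <= \sum_i cabs (F i).
Proof.
elim/big_ind2: _ => [|z1 z2 x1 x2 h1 h2|//]; first by rewrite cabs0.
exact: le_trans (ler_cabsD _ _) (lerD h1 h2).
Qed.

End ComplexModulus.

Section L1Norm.
Variable R : realType.
Local Notation C := R[i].

Definition l1norm p q (M : 'M[C]_(p, q)) : R := \sum_i \sum_j cabs (M i j).

Lemma l1norm_ge0 p q (M : 'M[C]_(p, q)) : 0 <= l1norm M.
Proof. by apply: sumr_ge0 => i _; apply: sumr_ge0 => j _; apply: cabs_ge0. Qed.

Lemma ler_cabs_l1norm p q (M : 'M[C]_(p, q)) i j : cabs (M i j) <= l1norm M.
Proof.
rewrite /l1norm (bigD1 i) //= (bigD1 j) //= -addrA lerDl.
by rewrite addr_ge0 ?sumr_ge0 // => k _; rewrite ?cabs_ge0 ?sumr_ge0 // => l _;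
  apply: cabs_ge0.
Qed.

Lemma l1norm_le0 p q (M : 'M[C]_(p, q)) : l1norm M <= 0 -> M = 0.
Proof.
move=> M0; apply/matrixP => i j; rewrite mxE; apply: cabs_eq0.
by apply/eqP; rewrite eq_le cabs_ge0 (le_trans (ler_cabs_l1norm M i j)).
Qed.

Lemma l1norm0 p q : l1norm (0 : 'M[C]_(p, q)) = 0.
Proof. by rewrite /l1norm big1 // => i _; rewrite big1 // => j _; rewrite mxE cabs0. Qed.

Lemma ler_l1normD p q (M N : 'M[C]_(p, q)) : l1norm (M + N) <= l1norm M + l1norm N.
Proof.
rewrite /l1norm -big_split ler_sum // => i _; rewrite -big_split ler_sum // => j _.
by rewrite mxE ler_cabsD.
Qed.

Lemma l1normN p q (M : 'M[C]_(p, q)) : l1norm (- M) = l1norm M.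
Proof. by apply: eq_bigr => i _; apply: eq_bigr => j _; rewrite mxE cabsN. Qed.

Lemma ler_l1normB p q (M N : 'M[C]_(p, q)) : l1norm (M - N) <= l1norm M + l1norm N.
Proof. by rewrite -(l1normN N) ler_l1normD. Qed.

Lemma l1normZ p q c (M : 'M[C]_(p, q)) : l1norm (c *: M) = cabs c * l1norm M.
Proof.
rewrite /l1norm mulr_sumr; apply: eq_bigr => i _; rewrite mulr_sumr.
by apply: eq_bigr => j _; rewrite mxE cabsM.
Qed.

Lemma ler_l1norm_sum p q (I : finType) (F : I -> 'M[C]_(p, q)) :
  l1norm (\sum_i F i) <= \sum_i l1norm (F i).
Proof.
elim/big_ind2: _ => [|M1 M2 x1 x2 h1 h2|//]; first by rewrite l1norm0.
exact: le_trans (ler_l1normD _ _) (lerD h1 h2).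
Qed.

Lemma ler_l1normM p q r (M : 'M[C]_(p, q)) (N : 'M[C]_(q, r)) :
  l1norm (M *m N) <= l1norm M * l1norm N.
Proof.
rewrite /l1norm mulr_suml ler_sum // => i _.
apply: (@le_trans _ _ (\sum_k \sum_j cabs (M i j) * cabs (N j k))).
  rewrite ler_sum // => k _; rewrite mxE (le_trans (ler_cabs_sum _)) //.
  by rewrite ler_sum // => j _; rewrite cabsM.
rewrite exchange_big /= mulr_suml ler_sum // => j _.
rewrite -mulr_sumr ler_wpM2l ?cabs_ge0 // (bigD1 j) //= lerDl.
by apply: sumr_ge0 => k _; apply: sumr_ge0 => l _; apply: cabs_ge0.
Qed.

Lemma l1norm1 m : l1norm (1%:M : 'M[C]_m) = m%:R.
Proof.
rewrite /l1norm -[m in RHS]card_ord -sumr_const; apply: eq_bigr => i _.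
rewrite (bigD1 i) //= big1 ?addr0; first by rewrite mxE eqxx cabs_real normr1.
by move=> j /negbTE ji; rewrite mxE eq_sym ji cabs0.
Qed.

Lemma ler_l1norm_1B m (Y : 'M[C]_m) : l1norm (1%:M - Y) <= m%:R + l1norm Y.
Proof. by rewrite -l1norm1 ler_l1normB. Qed.

Lemma l1norm_col m (v : 'cV[C]_m) : l1norm v = \sum_i cabs (v i ord0).
Proof. by apply: eq_bigr => i _; rewrite big_ord1. Qed.

Lemma ler_cabs_vnorm m (v : 'cV[C]_m) i : cabs (v i ord0) <= vnorm v.
Proof.
rewrite /vnorm /cabs ler_wsqrtr // (bigD1 i) //= lerDl.
by apply: sumr_ge0 => k _; rewrite addr_ge0 ?sqr_ge0.
Qed.

Lemma ler_vnorm_l1norm m (v : 'cV[C]_m) : vnorm v <= l1norm v.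
Proof.
rewrite /vnorm -(ger0_norm (l1norm_ge0 v)) -sqrtr_sqr ler_wsqrtr //.
rewrite expr2 {2}l1norm_col mulr_sumr ler_sum // => i _.
have -> : complex.Re (v i ord0) ^+ 2 + complex.Im (v i ord0) ^+ 2 = cabs (v i ord0) ^+ 2.
  by rewrite sqr_sqrtr // addr_ge0 ?sqr_ge0.
by rewrite expr2 mulrC ler_wpM2r ?cabs_ge0 ?ler_cabs_l1norm.
Qed.

Lemma ler_l1norm_vnorm m (v : 'cV[C]_m) : l1norm v <= m%:R * vnorm v.
Proof.
rewrite l1norm_col -[m in m%:R]card_ord -sumr_const mulr_suml ler_sum // => i _.
by rewrite mul1r ler_cabs_vnorm.
Qed.

Lemma ler_cabs_opnorm m (Y : 'M[C]_m) i j : cabs (Y i j) <= opnorm Y.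
Proof.
have Sbounded : has_ubound [set vnorm (Y *m v) | v in [set v | vnorm v <= 1]].
  exists (l1norm Y * (m%:R * 1)) => _ [v /= v1 <-].
  rewrite (le_trans (ler_vnorm_l1norm _)) // (le_trans (ler_l1normM _ _)) //.
  by rewrite ler_wpM2l ?l1norm_ge0 // (le_trans (ler_l1norm_vnorm _)) ?ler_wpM2l.
have ej1 : vnorm (delta_mx j ord0 : 'cV[C]_m) <= 1.
  rewrite (le_trans (ler_vnorm_l1norm _)) // l1norm_col (bigD1 j) //= big1 ?addr0.
    by rewrite mxE !eqxx cabs_real normr1.
  by move=> k /negbTE kj; rewrite mxE kj cabs0.
apply: le_trans (ub_le_sup Sbounded _); last by exists (delta_mx j ord0).
by rewrite -colE (le_trans _ (ler_cabs_vnorm _ i)) // mxE.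
Qed.

Lemma ler_l1norm_opnorm m (Y : 'M[C]_m) : l1norm Y <= (m ^ 2)%:R * opnorm Y.
Proof.
have sum1 : (m%:R : R) = \sum_(i < m) 1 by rewrite sumr_const card_ord.
rewrite natrX expr2 -mulrA {1}sum1 mulr_suml ler_sum // => i _.
by rewrite mul1r sum1 mulr_suml ler_sum // => j _; rewrite mul1r ler_cabs_opnorm.
Qed.

End L1Norm.

Lemma linear_inj_surj (K : fieldType) (V : vectType K) (f : {linear V -> V}) :
  injective f -> forall y, exists x, f x = y.
Proof.
move=> f_inj y; have kerf : lker (linfun f) == 0%VS.
  by apply/lker0P => x1 x2; rewrite !lfunE; apply: f_inj.
by exists ((linfun f)^-1%VF y); rewrite -(lfunE f) lker0_lfunVK.
Qed.

Section Phimap.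
Variables (R : realType) (n : nat) (P X : 'M[R[i]]_n).

Lemma phimap_is_linear : linear (phimap P X).
Proof.
move=> c M N; rewrite /phimap !mulmxDl !mulmxDr -!scalemxAl -!scalemxAr.
by rewrite !scalerDr !addrA [LHS](ACl (1*3*5*2*4*6)).
Qed.

HB.instance Definition _ :=
  GRing.isLinear.Build R[i] 'M[R[i]]_n 'M[R[i]]_n *:%R (phimap P X) phimap_is_linear.

Lemma phimap_mulmx_comm W M : comm_mx X W -> phimap P X (M *m W) = phimap P X M *m W.
Proof.
move=> XW; rewrite /phimap mulmxDl -(mulmxA P) mulmxDl -(mulmxA M W X) -XW.
by rewrite !mulmxA.
Qed.

Hypothesis PX_small : 4 * (l1norm P * l1norm X) <= 1.

Lemma ler_l1norm_phimap N : l1norm N <= 2 * l1norm (phimap P X N).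
Proof.
have dev : l1norm (phimap P X N - N) <= l1norm P * (2 * (l1norm X * l1norm N)).
  rewrite /phimap addrC addKr (le_trans (ler_l1normM _ _)) // ler_wpM2l ?l1norm_ge0 //.
  rewrite mulr2n mulrDl mul1r (le_trans (ler_l1normD _ _)) // lerD //.
    by rewrite mulrC ler_l1normM.
  exact: ler_l1normM.
have tri : l1norm N <= l1norm (phimap P X N) + l1norm (phimap P X N - N).
  by rewrite -{1}[N](subKr (phimap P X N)) ler_l1normB.
have : 0 <= (1 - 4 * (l1norm P * l1norm X)) * l1norm N.
  by rewrite mulr_ge0 ?l1norm_ge0 // subr_ge0.
lra.
Qed.

Lemma phimap_inj : injective (phimap P X).
Proof.
move=> M N eqMN; apply/eqP; rewrite -subr_eq0; apply/eqP/l1norm_le0.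
by rewrite (le_trans (ler_l1norm_phimap _)) // linearB /= eqMN subrr l1norm0 mulr0.
Qed.

End Phimap.

Lemma quadratic_solution_sub (T : pzRingType) (P B X Y : T) :
  (P + B) * (Y * Y) + (1 - (B + B)) * Y + (P + B) = 0 ->
  P * (X * X) + X + P = 0 ->
  (Y - X) + P * ((Y - X) * X + X * (Y - X)) =
    - (B * ((1 - Y) * (1 - Y))) - P * ((Y - X) * (Y - X)).
Proof.
move=> hY hX.
have hYB : P * (Y * Y) + Y + P = - (B * ((1 - Y) * (1 - Y))).
  apply/eqP; rewrite -subr_eq0 opprK -[X in _ == X]hY; apply/eqP.
  rewrite !(mulrDl, mulrBl, mulrDr, mulrBr, mul1r, mulr1, mulrN, mulNr, opprK, opprD, addrA).
  by rewrite [LHS](ACl (1*7*2*5*6*3*4)).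
have sqYX : Y * Y - X * X = (Y - X) * X + X * (Y - X) + (Y - X) * (Y - X).
  rewrite !(mulrBl, mulrBr, opprB, addrA).
  by rewrite [RHS](ACl ((5*2)*(1*6)*(3*8)*(4*7))) /= !subrr addNr !addr0.
have hYX : P * (Y * Y - X * X) + (Y - X) = - (B * ((1 - Y) * (1 - Y))).
  rewrite -hYB -[RHS]subr0 -hX mulrBr !opprD !addrA.
  by rewrite [RHS](ACl (1*4*2*5*(3*6))) /= subrr addr0.
by rewrite -hYX sqYX (mulrDr P (_ + _)) [X in X - _]addrAC addrK addrC.
Qed.

Section Perturbation.
Variables (R : realType) (n : nat) (P X : 'M[R[i]]_n) (k : R).
Hypotheses (X_sol : P *m (X *m X) + X + P = 0) (X_le : l1norm X <= k)
  (P_small : 8 * (l1norm P * k) <= 1).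
Local Notation u := (n%:R + k).

Lemma mul_l1norm_small : 4 * (l1norm P * l1norm X) <= 1.
Proof.
have pk_ge0 : 0 <= l1norm P * k by rewrite mulr_ge0 ?l1norm_ge0 ?(le_trans (l1norm_ge0 X)).
have : l1norm P * l1norm X <= l1norm P * k by rewrite ler_wpM2l ?l1norm_ge0.
have := P_small; lra.
Qed.

Let l1norm_1B_le (Z : 'M[R[i]]_n) : l1norm Z <= k -> l1norm (1%:M - Z) <= u.
Proof. by move=> Z_le; rewrite (le_trans (ler_l1norm_1B _)) ?lerD2l. Qed.

Lemma phimap_solution_sub B Y :
  (P + B) *m (Y *m Y) + (1%:M - (B + B)) *m Y + (P + B) = 0 ->
  phimap P X (Y - X) = - (B *m ((1%:M - Y) *m (1%:M - Y))) - P *m ((Y - X) *m (Y - X)).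
Proof.
move=> Y_sol; have := @quadratic_solution_sub _ P B X Y.
by rewrite -!mulmxE -idmxE; apply.
Qed.

Lemma ler_l1norm_solution_sub B Y :
  (P + B) *m (Y *m Y) + (1%:M - (B + B)) *m Y + (P + B) = 0 -> l1norm Y <= k ->
  l1norm (Y - X) <= 4 * u ^+ 2 * l1norm B.
Proof.
move=> Y_sol Y_le; have := ler_l1norm_phimap mul_l1norm_small (Y - X).
rewrite (phimap_solution_sub Y_sol); set E := Y - X; set e := l1norm E => e_phi.
have e_le : e <= 2 * k by rewrite (le_trans (ler_l1normB _ _)) // mulr2n mulrDl mul1r lerD.
have BU_le : l1norm (B *m ((1%:M - Y) *m (1%:M - Y))) <= l1norm B * u ^+ 2.
  rewrite (le_trans (ler_l1normM _ _)) // ler_wpM2l ?l1norm_ge0 //.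
  by rewrite expr2 (le_trans (ler_l1normM _ _)) // ler_pM ?l1norm_ge0 ?l1norm_1B_le.
have PEE_le : l1norm (P *m (E *m E)) <= l1norm P * (e * e).
  by rewrite (le_trans (ler_l1normM _ _)) // ler_wpM2l ?l1norm_ge0 ?ler_l1normM.
have := ler_l1normB (- (B *m ((1%:M - Y) *m (1%:M - Y)))) (P *m (E *m E)).
rewrite l1normN => phi_le.
have PEE_lin : l1norm P * (e * e) <= l1norm P * (e * (2 * k)).
  by rewrite ler_wpM2l ?l1norm_ge0 // ler_wpM2l ?l1norm_ge0.
have : 0 <= (1 - 8 * (l1norm P * k)) * e by rewrite mulr_ge0 ?l1norm_ge0 // subr_ge0.
lra.
Qed.

Lemma ler_l1norm_solution_second_order S D t Y :
  phimap P X D = - (S *m ((1%:M - X) *m (1%:M - X))) ->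
  (P + t%:C *: S) *m (Y *m Y) + (1%:M - (t%:C *: S + t%:C *: S)) *m Y + (P + t%:C *: S) = 0 ->
  l1norm Y <= k ->
  l1norm (Y - X - t%:C *: D) <=
    16 * u ^+ 3 * (1 + 2 * l1norm P * u) * l1norm S ^+ 2 * t ^+ 2.
Proof.
move=> D_eq Y_sol Y_le; set B := t%:C *: S in Y_sol *; set E := Y - X.
have B_norm : l1norm B = `|t| * l1norm S by rewrite l1normZ cabs_real.
have e_le := ler_l1norm_solution_sub Y_sol Y_le; rewrite -/E B_norm in e_le.
set e := l1norm E in e_le.
have sqdiff : (1%:M - X) *m (1%:M - X) - (1%:M - Y) *m (1%:M - Y) =
    (1%:M - X) *m E + E *m (1%:M - Y).
  have UV : (1%:M - X) - (1%:M - Y) = E by rewrite opprB addrC addrA subrK.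
  by move: (1%:M - X) (1%:M - Y) UV => U V <-; rewrite mulmxBr mulmxBl addrA subrK.
have phiG : phimap P X (E - t%:C *: D) =
    B *m ((1%:M - X) *m (1%:M - X) - (1%:M - Y) *m (1%:M - Y)) - P *m (E *m E).
  rewrite linearB linearZ /= (phimap_solution_sub Y_sol) D_eq scalerN scalemxAl -/B -/E.
  by rewrite [in RHS]mulmxBr opprK addrC addrA.
have := ler_l1norm_phimap mul_l1norm_small (E - t%:C *: D); rewrite phiG sqdiff => G_le.
have u_ge0 : 0 <= u by rewrite addr_ge0 ?ler0n ?(le_trans (l1norm_ge0 X)).
have diff_le : l1norm ((1%:M - X) *m E + E *m (1%:M - Y)) <= 2 * u * e.
  rewrite mulr2n !mulrDl mul1r (le_trans (ler_l1normD _ _)) // lerD //.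
    by rewrite (le_trans (ler_l1normM _ _)) // ler_wpM2r ?l1norm_ge0 ?l1norm_1B_le.
  by rewrite (le_trans (ler_l1normM _ _)) // [X in _ <= X]mulrC ler_wpM2l ?l1norm_ge0 ?l1norm_1B_le.
have Bt_ge0 : 0 <= `|t| * l1norm S by rewrite mulr_ge0 ?l1norm_ge0.
have e_ge0 : 0 <= e := l1norm_ge0 E.
have phiG_le : l1norm (B *m ((1%:M - X) *m E + E *m (1%:M - Y)) - P *m (E *m E)) <=
    `|t| * l1norm S * (2 * u * e) + l1norm P * (e * e).
  rewrite (le_trans (ler_l1normB _ _)) // lerD //.
    by rewrite -B_norm (le_trans (ler_l1normM _ _)) // ler_wpM2l ?l1norm_ge0.
  by rewrite (le_trans (ler_l1normM _ _)) // ler_wpM2l ?l1norm_ge0 ?ler_l1normM.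
have linear_le : `|t| * l1norm S * (2 * u * e) <=
    `|t| * l1norm S * (2 * u * (4 * u ^+ 2 * (`|t| * l1norm S))).
  by rewrite ler_wpM2l // ler_wpM2l ?mulr_ge0.
have quadratic_le : l1norm P * (e * e) <=
    l1norm P * ((4 * u ^+ 2 * (`|t| * l1norm S)) * (4 * u ^+ 2 * (`|t| * l1norm S))).
  by rewrite ler_wpM2l ?l1norm_ge0 // ler_pM.
rewrite -[t ^+ 2]real_normK ?num_real //; lra.
Qed.

End Perturbation.

Lemma is_derive0_quadratic (R : realType) (f : R -> R) (L c r : R) : 0 < r ->
  (forall t, `|t| < r -> `|f t - f 0 - t * L| <= c * t ^+ 2) -> is_derive (0 : R) (1 : R) f L.
Proof.
move=> r_gt0 f_le; set c' := `|c| + 1.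
have c'_gt0 : 0 < c' by rewrite ltr_pwDr ?normr_ge0.
have f_le' t : `|t| < r -> `|f t - f 0 - t * L| <= c' * t ^+ 2.
  move=> /f_le /le_trans; apply; rewrite ler_wpM2r ?sqr_ge0 //.
  by rewrite (le_trans (ler_norm c)) // lerDl.
have quot : (fun h : R => h^-1 *: ((f \o shift 0) (h *: 1) - f 0)) @ 0^' --> L.
  apply/cvgrPdist_lt => e e_gt0; near=> h.
  have h_neq0 : h != 0 by near: h; exact: nbhs_dnbhs_neq.
  have h_r : `|h| < r by near: h; exact: dnbhs0_lt.
  have h_e : `|h| < e / c' by near: h; apply: dnbhs0_lt; exact: divr_gt0.
  rewrite /= scaler1 /shift addr0.
  have -> : L - h^-1 *: (f h - f 0) = - (h^-1 * (f h - f 0 - h * L)).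
    by rewrite /GRing.scale /=; field.
  rewrite normrN normrM normrV ?unitfE // ltr_pdivrMl ?normr_gt0 //.
  apply: le_lt_trans (f_le' h h_r) _.
  rewrite -real_normK ?num_real // expr2 mulrA [X in _ < X]mulrC ltr_pM2r ?normr_gt0 //.
  by rewrite mulrC -ltr_pdivlMr.
split; first by apply/cvg_ex; exists L.
exact: cvg_lim.
Unshelve. all: by end_near. Qed.

Lemma Re_sub_scale (R : realType) (x y z : R[i]) (t : R) :
  complex.Re (x - y - t%:C * z) = complex.Re x - complex.Re y - t * complex.Re z.
Proof. by case: x => ? ?; case: y => ? ?; case: z => ? ? /=; ring. Qed.

Lemma Im_sub_scale (R : realType) (x y z : R[i]) (t : R) :
  complex.Im (x - y - t%:C * z) = complex.Im x - complex.Im y - t * complex.Im z.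
Proof. by case: x => ? ?; case: y => ? ?; case: z => ? ? /=; ring. Qed.

Lemma mx_has_derive0_quadratic (R : realType) n (Y : R -> 'M[R[i]]_n) D (c r : R) :
  0 < r -> (forall t, `|t| < r -> l1norm (Y t - Y 0 - t%:C *: D) <= c * t ^+ 2) ->
  mx_has_derive0 Y D.
Proof.
move=> r_gt0 Y_le i j; split; apply: (is_derive0_quadratic r_gt0) => t /Y_le;
  apply: le_trans; have := ler_cabs_l1norm (Y t - Y 0 - t%:C *: D) i j; rewrite !mxE.
  by rewrite -Re_sub_scale; apply: le_trans; apply: ler_Re_cabs.
by rewrite -Im_sub_scale; apply: le_trans; apply: ler_Im_cabs.
Qed.

Section RealLincomb.
Variables (R : realType) (d n : nat) (A : 'I_d -> 'M[R[i]]_n).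
Hypothesis A_herm : forall j, is_hermitian (A j).

Lemma is_hermitian_lincomb_real (x : 'I_d -> R) :
  is_hermitian (lincomb (fun j => rC (x j)) A).
Proof.
apply/matrixP => i k; rewrite /adjmx !mxE /lincomb !summxE rmorph_sum.
apply: eq_bigr => j _; rewrite !mxE rmorphM /= oppr0.
by have := congr1 (fun M : 'M[R[i]]_n => M i k) (A_herm j); rewrite /adjmx !mxE => ->.
Qed.

Lemma shift_re0 (a0 : 'I_d -> R) s : shift_re a0 s 0 = (fun j => rC (a0 j)).
Proof. by apply/funext => j; rewrite /shift_re; case: ifP; rewrite addr0. Qed.

Lemma cabs_shift_re (a0 : 'I_d -> R) s t j : cabs (shift_re a0 s t j) <= `|a0 j| + `|t|.
Proof.
rewrite cabs_real (le_trans (ler_normD _ _)) // lerD2l.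
by case: ifP; rewrite ?normr0.
Qed.

Lemma Pa_shift (a0 : 'I_d -> R) s t :
  Pa A (shift_re a0 s t) = Pa A (fun j => rC (a0 j)) + t%:C *: A s.
Proof.
rewrite /Pa /lincomb /shift_re /rC; under eq_bigr do rewrite rmorphD scalerDl.
rewrite big_split /=; congr (_ + _).
by rewrite (bigD1 s) //= eqxx big1 ?addr0 // => j /negbTE ->; rewrite scale0r.
Qed.

Lemma Aa_shift (b : 'I_d -> R) (a0 : 'I_d -> R) s t :
  Aa A b (shift_re a0 s t) = Aa A b (fun j => rC (a0 j)) - (t%:C *: A s + t%:C *: A s).
Proof.
rewrite /Aa /lincomb -scalerDl (bigD1 s) //= [in RHS](bigD1 s) //=.
rewrite [in RHS]addrAC -scalerBl; congr (_ *: _ + _).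
  by rewrite /shift_re /rC eqxx !conj_Creal ?complex_real // rmorphD /=; ring.
by apply: eq_bigr => j /negbTE js; rewrite /shift_re js addr0.
Qed.

Lemma ler_l1norm_lincomb_real (x : 'I_d -> R) :
  l1norm (lincomb (fun j => rC (x j)) A) <= \sum_j `|x j| * l1norm (A j).
Proof.
rewrite (le_trans (ler_l1norm_sum _)) // ler_sum // => j _.
by rewrite l1normZ cabs_real.
Qed.

Lemma Pa_small (k : R) : 0 <= k -> exists2 delta : R, 0 < delta &
  forall a0 : 'I_d -> R, (forall j, `|a0 j| < delta) ->
    8 * (l1norm (Pa A (fun j => rC (a0 j))) * k) <= 1.
Proof.
move=> k_ge0; set sA := \sum_j l1norm (A j).
have sA_ge0 : 0 <= sA by rewrite sumr_ge0 // => j _; rewrite l1norm_ge0.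
have den_gt0 : 0 < 8 * (k + 1) * (sA + 1) by rewrite !mulr_gt0 ?ltr_wpDl.
set delta := (8 * (k + 1) * (sA + 1))^-1.
have delta_ge0 : 0 <= delta by rewrite invr_ge0 ltW.
exists delta => [|a0 a0_small]; first by rewrite invr_gt0.
have P_le : l1norm (Pa A (fun j => rC (a0 j))) <= delta * sA.
  rewrite (le_trans (ler_l1norm_lincomb_real _)) // /sA mulr_sumr ler_sum // => j _.
  by rewrite ler_wpM2r ?l1norm_ge0 ?ltW.
have := ler_wpM2r k_ge0 P_le.
have : delta * (8 * (k + 1) * (sA + 1)) = 1 by rewrite mulVf ?gt_eqF.
have : 0 <= delta * (k + sA + 1) by rewrite mulr_ge0 ?addr_ge0.
lra.
Qed.

Lemma solves_eq_shift (b a0 : 'I_d -> R) s t Y :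
  Aa A b (fun j => rC (a0 j)) = 1%:M -> solves_eq A b (shift_re a0 s t) Y ->
  let P := Pa A (fun j => rC (a0 j)) in let B := t%:C *: A s in
  (P + B) *m (Y *m Y) + (1%:M - (B + B)) *m Y + (P + B) = 0.
Proof.
have herm : is_hermitian (Pa A (shift_re a0 s t)) := is_hermitian_lincomb_real _.
by move=> Aa1; rewrite /solves_eq herm Aa_shift Aa1 Pa_shift.
Qed.

End RealLincomb.

Section ShiftedSolutions.
Variables (R : realType) (d n : nat) (A : 'I_d -> 'M[R[i]]_n) (b : 'I_d -> R).
Variables (X : ('I_d -> R[i]) -> 'M[R[i]]_n) (eps : R) (a0 : 'I_d -> R) (s : 'I_d).
Hypotheses (A_herm : forall j, is_hermitian (A j)) (eps_gt0 : 0 < eps).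
Hypothesis X_sol : forall a, (forall j, cabs (a j) < eps) ->
  opnorm (X a) < 1 /\ solves_eq A b a (X a).
Hypotheses (a0_small : forall j, `|a0 j| < eps / 2) (Aa1 : Aa A b (fun j => rC (a0 j)) = 1%:M).
Local Notation P := (Pa A (fun j => rC (a0 j))).

Let shift_small t : `|t| < eps / 2 -> forall j, cabs (shift_re a0 s t j) < eps.
Proof.
by move=> t_small j; rewrite (le_lt_trans (cabs_shift_re _ _ _ _)) // [eps]splitr ltrD.
Qed.

Lemma shifted_solution_le t : `|t| < eps / 2 -> l1norm (X (shift_re a0 s t)) <= (n ^ 2)%:R.
Proof.
move=> /shift_small /X_sol[Xt_op _].
by rewrite (le_trans (ler_l1norm_opnorm _)) // ler_piMr ?ler0n ?ltW.
Qed.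

Lemma shifted_solution_eq t : `|t| < eps / 2 ->
  let Y := X (shift_re a0 s t) in let B := t%:C *: A s in
  (P + B) *m (Y *m Y) + (1%:M - (B + B)) *m Y + (P + B) = 0.
Proof. by move=> /shift_small /X_sol[_ Xt_eq]; have := solves_eq_shift A_herm Aa1 Xt_eq. Qed.

Lemma base_solution_eq : let X0 := X (fun j => rC (a0 j)) in P *m (X0 *m X0) + X0 + P = 0.
Proof.
have a0_eps j : cabs (rC (a0 j)) < eps.
  by rewrite cabs_real (lt_trans (a0_small j)) // [X in _ < X]splitr ltrDl divr_gt0.
have [_ X0_eq] := X_sol a0_eps.
have herm : is_hermitian P := is_hermitian_lincomb_real A_herm _.
by move: X0_eq; rewrite /solves_eq herm Aa1 mul1mx.
Qed.

End ShiftedSolutions.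

Theorem lemma4p1 (R : realType) (d n : nat)
  (A : 'I_d -> 'M[R[i]]_n) (b : 'I_d -> R)
  (X : ('I_d -> R[i]) -> 'M[R[i]]_n) :
  (forall j, is_hermitian (A j)) ->
  strongly_pseudoconvex A ->
  lincomb (fun j => rC (b j)) A \in unitmx ->
  (* X(a) is, for a near 0, the unique matrix of norm < 1 solving the equation *)
  (exists2 eps : R, 0 < eps &
     forall a : 'I_d -> R[i], (forall j, cabs (a j) < eps) ->
       [/\ opnorm (X a) < 1, solves_eq A b a (X a) &
           forall Y : 'M[R[i]]_n, opnorm Y < 1 -> solves_eq A b a Y -> Y = X a]) ->
  exists2 delta : R, 0 < delta &
    forall a0 : 'I_d -> R, (forall j, `|a0 j| < delta) ->
      Aa A b (fun j => rC (a0 j)) = 1%:M ->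
      let P := Pa A (fun j => rC (a0 j)) in
      let X0 := X (fun j => rC (a0 j)) in
      forall s : 'I_d,
        exists D : 'M[R[i]]_n,
          [/\ mx_has_derive0 (fun t => X (shift_re a0 s t)) D,
              injective (phimap P X0),
              phimap P X0 D = - (A s *m ((1%:M - X0) *m (1%:M - X0))) &
              exists2 N : 'M[R[i]]_n, phimap P X0 N = A s &
                D = - (N *m ((1%:M - X0) *m (1%:M - X0)))].
Proof.
(* Pseudoconvexity and the invertibility of [sum_j b_j A_j] only serve to construct [X],
   which is given here. *)
move=> A_herm _ _ [eps eps_gt0 X_unique].
have X_sol a : (forall j, cabs (a j) < eps) -> opnorm (X a) < 1 /\ solves_eq A b a (X a).
  by move=> /X_unique[].
have [delta0 delta0_gt0 P_small] := Pa_small A (ler0n _ (n ^ 2)).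
exists (Num.min (eps / 2) delta0) => [|a0 a0_small Aa1 P X0 s].
  by rewrite lt_min delta0_gt0 divr_gt0.
have [a0_eps a0_delta0] : (forall j, `|a0 j| < eps / 2) /\ (forall j, `|a0 j| < delta0).
  by split=> j; have := a0_small j; rewrite lt_min => /andP[].
have eps2_gt0 : 0 < eps / 2 by rewrite divr_gt0.
have X00 : X (shift_re a0 s 0) = X0 by rewrite shift_re0.
have X0_le : l1norm X0 <= (n ^ 2)%:R.
  by rewrite -X00 (shifted_solution_le s X_sol a0_eps) ?normr0.
have X0_sol := base_solution_eq A_herm eps_gt0 X_sol a0_eps Aa1.
have P_small0 := P_small a0 a0_delta0.
have phi_inj := phimap_inj (mul_l1norm_small X0_le P_small0).
set W := (1%:M - X0) *m (1%:M - X0).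
have XW : comm_mx X0 W by have XU := comm_mxB (comm_mx1 X0) (comm_mx_refl X0); apply: comm_mxM.
have [D D_eq] := linear_inj_surj phi_inj (- (A s *m W)).
have [N N_eq] := linear_inj_surj phi_inj (A s).
exists D; split => //; last first.
  by exists N => //; apply: phi_inj; rewrite D_eq linearN /= phimap_mulmx_comm // N_eq.
apply: (mx_has_derive0_quadratic eps2_gt0) => t t_small; rewrite X00.
exact: (ler_l1norm_solution_second_order X0_sol X0_le P_small0 D_eq
  (shifted_solution_eq s A_herm X_sol a0_eps Aa1 t_small)
  (shifted_solution_le s X_sol a0_eps t_small)).
Qed.
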